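(* A nondegenerate NSC $p$ satisfies Dissimilar Regularity if and only if it is an increasing NSC, i.e., it admits an NSC representation $(v,u,\{X_i\}_{i=1}^K)$ such that $v(A)\ge v(B)$ for every $i\le K$ and all nonempty $B\subseteq A\subseteq X_i$.
   Context: $X$ is a finite set, $\mathscr{A}$ the nonempty subsets; $p$ is a positive stochastic choice function; $A\cup y=A\cup\{y\}$. $a\sim_p b$ means $\frac{p(a,A)}{p(b,A)}=\frac{p(a,\{a,b\})}{p(b,\{a,b\})}$ for all $A\ni a,b$. NSC: there exist a partition $X_1,\dots,X_K$ of $X$, $u:X\to\mathbb{R}_{++}$, $v:\bigcup_i 2^{X_i}\to\mathbb{R}_+$ with $v(\emptyset)=0$, and $p(a,A)=\frac{v(A\cap X_i)}{\sum_j v(A\cap X_j)}\frac{u(a)}{\sum_{b\in A\cap X_i}u(b)}$ for $a\in A\cap X_i$. Nondegenerate: at most one $i$ for which some $a\in X_i$ satisfies $\frac{\sum_{x\in A_i}u(x)}{v(A_i)}=\frac{u(a)}{v(\{a\})}$ for all $A_i\subseteq X_i$ containing $a$. Dissimilar Regularity: for any $A\in\mathscr{A}$, $x\in A$ and $y\in X$ with $x\not\sim_p y$, $p(x,A\cup y)\le p(x,A)$. *)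

From HB Require Import structures.
From mathcomp Require Import all_boot all_order all_algebra.
From mathcomp Require Import reals.
Set Implicit Arguments. Unset Strict Implicit. Unset Printing Implicit Defensive.
Import Order.TTheory GRing.Theory Num.Theory.
Local Open Scope ring_scope.

Definition stochastic_choice (R : realType) (X : finType)
  (p : X -> {set X} -> R) : Prop :=
  (forall A : {set X}, A != set0 -> \sum_(a in A) p a A = 1) /\
  (forall (A : {set X}) (a : X), a \notin A -> p a A = 0) /\
  (forall (A : {set X}) (a : X), a \in A -> 0 <= p a A).

Definition positive_scf (R : realType) (X : finType)
  (p : X -> {set X} -> R) : Prop :=
  stochastic_choice p /\ forall (A : {set X}) (a : X), a \in A -> 0 < p a A.

Definition sim_p (R : realType) (X : finType) (p : X -> {set X} -> R)
  (a b : X) : Prop :=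
  forall A : {set X}, a \in A -> b \in A ->
    p a A / p b A = p a [set a; b] / p b [set a; b].

Definition dissimilar_regularity (R : realType) (X : finType)
  (p : X -> {set X} -> R) : Prop :=
  forall (A : {set X}) (x y : X), A != set0 -> x \in A -> ~ sim_p p x y ->
    p x (y |: A) <= p x A.

(* NSC representation (v, u, P): P is a partition of X (nonempty blocks),
   u : X -> R_{++}, v : subsets of blocks -> R_+ with v(emptyset) = 0
   (v is given as a function on all subsets, only its values on subsets
   of blocks are used). *)
Definition NSC_rep (R : realType) (X : finType) (p : X -> {set X} -> R)
  (P : {set {set X}}) (u : X -> R) (v : {set X} -> R) : Prop :=
  [/\ partition P [set: X],
      (forall x, 0 < u x),
      (forall (Xi B : {set X}), Xi \in P -> B \subset Xi -> 0 <= v B),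
      v set0 = 0 &
      forall (A : {set X}) (a : X) (Xi : {set X}), Xi \in P -> a \in A ->
        a \in Xi ->
        p a A = v (A :&: Xi) / (\sum_(Xj in P) v (A :&: Xj))
                * (u a / \sum_(b in A :&: Xi) u b)].

Definition degenerate_block (R : realType) (X : finType)
  (u : X -> R) (v : {set X} -> R) (Xi : {set X}) : Prop :=
  exists2 a, a \in Xi &
    forall Ai : {set X}, Ai \subset Xi -> a \in Ai ->
      (\sum_(x in Ai) u x) / v Ai = u a / v [set a].

Definition nondegenerate_rep (R : realType) (X : finType)
  (P : {set {set X}}) (u : X -> R) (v : {set X} -> R) : Prop :=
  forall Xi Xj : {set X}, Xi \in P -> Xj \in P ->
    degenerate_block u v Xi -> degenerate_block u v Xj -> Xi = Xj.

Definition nondegenerate_NSC (R : realType) (X : finType)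
  (p : X -> {set X} -> R) : Prop :=
  exists P u v, NSC_rep p P u v /\ nondegenerate_rep P u v.

Definition increasing_NSC (R : realType) (X : finType)
  (p : X -> {set X} -> R) : Prop :=
  exists P u v, NSC_rep p P u v /\
    forall Xi A B : {set X}, Xi \in P -> B != set0 -> B \subset A -> A \subset Xi ->
      v B <= v A.

From mathcomp Require Import all_boot all_order all_algebra.
From mathcomp Require Import reals.
From mathcomp Require Import ring.
Set Implicit Arguments. Unset Strict Implicit. Unset Printing Implicit Defensive.
Import Order.TTheory GRing.Theory Num.Theory.
Local Open Scope ring_scope.

(* Within a block the NSC is a Luce rule in u, so two alternatives of the same
   block are always similar; by nondegeneracy, alternatives of different
   blocks are never similar (similarity of x in X_i and y in X_j would make
   both blocks degenerate, witnessed by x and y).  Hence Dissimilar Regularity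
   only constrains adding an alternative y to a menu containing x from another
   block; this leaves the X_i-term of p x A unchanged and replaces
   v(A ∩ X_j) by v((y ∪ A) ∩ X_j) in the denominator, so it says exactly that
   v grows along X_j.  Increasing v hence gives Dissimilar Regularity, and
   conversely, as soon as there are two blocks, every block X_j sees an
   alternative from another block and v is increasing on X_j.  With a single
   block the factor v(A ∩ X_i) / v(A ∩ X_i) cancels, so v can be replaced by
   the indicator of nonemptiness. *)

Lemma le_setU1_homo_subset d (T : finType) (R : porderType d)
    (f : {set T} -> R) (S : {set T}) :
  (forall (B : {set T}) y, B \subset S -> y \in S -> (f B <= f (y |: B))%O) ->
  forall A B : {set T}, B \subset A -> A \subset S -> (f B <= f A)%O.
Proof.
move=> f_step A B sBA sAS; have [n] := ubnP #|A :\: B|.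
elim: n B sBA => // n IH B sBA ltn.
have [/eqP|[y]] := set_0Vmem (A :\: B).
  by rewrite setD_eq0 => sAB; have -> : A = B by apply/eqP; rewrite eqEsubset sAB.
rewrite inE => /andP[yNB yA].
apply: le_trans (f_step B y (subset_trans sBA sAS) (subsetP sAS y yA)) _.
apply: IH; first by rewrite subUset sub1set yA.
by move: ltn; rewrite (cardsD1 y) inE yNB yA setDDl setUC.
Qed.

Lemma exists_other_mem (T : finType) (A : {set T}) a :
  (1 < #|A|)%N -> exists2 b, b \in A & b != a.
Proof.
rewrite (cardsD1 a) => gt1.
have /set0Pn[b] : A :\ a != set0.
  rewrite -card_gt0; move: gt1.
  by case: (a \in A) => /=; [rewrite add1n ltnS | move/ltnW].
by rewrite !inE => /andP[]; exists b.
Qed.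

Section Partition.

Variables (X : finType) (P : {set {set X}}).
Hypothesis partP : partition P [set: X].

Lemma partition_block_eq (Xi Xj : {set X}) y :
  Xi \in P -> Xj \in P -> y \in Xi -> y \in Xj -> Xi = Xj.
Proof.
case/and3P: partP => _ trivP _ Pi Pj yi yj.
by rewrite -(def_pblock trivP Pi yi) (def_pblock trivP Pj yj).
Qed.

Lemma setI_other_block (Xi Xj S : {set X}) :
  Xi \in P -> Xj \in P -> Xi != Xj -> S \subset Xi -> S :&: Xj = set0.
Proof.
move=> Pi Pj neq_ij sSi; apply/setP=> z; rewrite !inE.
apply/andP=> -[zS zj]; move/eqP: neq_ij; apply.
exact: partition_block_eq Pi Pj (subsetP sSi z zS) zj.
Qed.

Lemma setU1I_other_block (Xi Xj A : {set X}) y :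
  Xi \in P -> Xj \in P -> Xi != Xj -> y \in Xj -> (y |: A) :&: Xi = A :&: Xi.
Proof.
move=> Pi Pj neq_ij yj; rewrite setIUl (@setI_other_block Xj Xi) ?set0U //.
  by rewrite eq_sym.
by rewrite sub1set.
Qed.

Lemma mem_pblock_setT x : x \in pblock P x.
Proof. by case/and3P: partP => /eqP cov _ _; rewrite mem_pblock cov inE. Qed.

Lemma pblock_setT_mem x : pblock P x \in P.
Proof. by case/and3P: partP => /eqP cov _ _; rewrite pblock_mem ?cov ?inE. Qed.

End Partition.

Lemma sim_p_sym (R : realType) (X : finType) (p : X -> {set X} -> R) x y :
  sim_p p x y -> sim_p p y x.
Proof.
move=> sim_xy A yA xA; apply: invr_inj.
by rewrite !invf_div sim_xy // [[set y; x]]setUC.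
Qed.

Section NSCRepresentation.

Variables (R : realType) (X : finType) (p : X -> {set X} -> R).
Variables (P : {set {set X}}) (u : X -> R) (v : {set X} -> R).
Hypotheses (p_pos : positive_scf p) (rep : NSC_rep p P u v).

Let partP : partition P [set: X]. Proof. by case: rep. Qed.
Let u_gt0 x : 0 < u x. Proof. by case: rep. Qed.
Let p_eq : forall (A : {set X}) a (Xi : {set X}),
    Xi \in P -> a \in A -> a \in Xi ->
  p a A = v (A :&: Xi) / (\sum_(Xj in P) v (A :&: Xj))
          * (u a / \sum_(b in A :&: Xi) u b).
Proof. by case: rep. Qed.

Let v_set0 : v set0 = 0. Proof. by case: rep. Qed.

Let vI_ge0 (A Xi : {set X}) : Xi \in P -> 0 <= v (A :&: Xi).
Proof. by case: rep => _ _ v_ge0 _ _ Pi; apply: v_ge0 Pi (subsetIr _ _). Qed.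

Lemma sum_u_gt0 (S : {set X}) a : a \in S -> 0 < \sum_(b in S) u b.
Proof.
move=> aS; rewrite (bigD1 a) //= ltr_pwDl // sumr_ge0 // => b _.
exact: ltW.
Qed.

Lemma nsc_block_weight_gt0 (A : {set X}) a (Xi : {set X}) :
  Xi \in P -> a \in A -> a \in Xi -> 0 < v (A :&: Xi).
Proof.
move=> Pi aA ai; rewrite lt0r vI_ge0 // andbT; apply/eqP => v0.
by have := p_pos.2 A a aA; rewrite (p_eq Pi) // v0 !mul0r ltxx.
Qed.

Lemma nsc_total_weight_gt0 (A : {set X}) a (Xi : {set X}) :
  Xi \in P -> a \in A -> a \in Xi -> 0 < \sum_(Xj in P) v (A :&: Xj).
Proof.
move=> Pi aA ai; rewrite (bigD1 Xi) //= ltr_pwDl //.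
  exact: nsc_block_weight_gt0 Pi aA ai.
by apply: sumr_ge0 => Xj /andP[Pj _]; apply: vI_ge0.
Qed.

Lemma nsc_singleton_weight_gt0 (Xi : {set X}) x :
  Xi \in P -> x \in Xi -> 0 < v [set x].
Proof.
move=> Pi xi; rewrite -(setIidPl (_ : [set x] \subset Xi)) ?sub1set //.
exact: nsc_block_weight_gt0 Pi (set11 x) xi.
Qed.

Lemma nsc_ratio_same_block (Xi A : {set X}) x y :
  Xi \in P -> x \in Xi -> y \in Xi -> x \in A -> y \in A ->
  p x A / p y A = u x / u y.
Proof.
move=> Pi xi yi xA yA; rewrite (p_eq Pi xA) // (p_eq Pi yA) //.
have vAi := nsc_block_weight_gt0 Pi xA xi; have TA := nsc_total_weight_gt0 Pi xA xi.
have SAi : 0 < \sum_(b in A :&: Xi) u b by apply: (sum_u_gt0 (a := x)); rewrite inE xA.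
by field; rewrite !gt_eqF.
Qed.

Lemma nsc_sim_same_block (Xi : {set X}) x y :
  Xi \in P -> x \in Xi -> y \in Xi -> sim_p p x y.
Proof.
move=> Pi xi yi A xA yA.
by rewrite !(nsc_ratio_same_block Pi xi yi) ?setU11 ?setU1r ?set11.
Qed.

Lemma nsc_ratio_setU1_other_block (Xi Xj Ai : {set X}) x y :
  Xi \in P -> Xj \in P -> Xi != Xj -> Ai \subset Xi -> x \in Ai -> y \in Xj ->
  p x (y |: Ai) / p y (y |: Ai)
    = v Ai * u x / ((\sum_(b in Ai) u b) * v [set y]).
Proof.
move=> Pi Pj neq_ij sAi xAi yj.
have xi := subsetP sAi x xAi; have xA := setU1r y xAi.
have eAi : (y |: Ai) :&: Xi = Ai.
  by rewrite (setU1I_other_block partP Ai Pi Pj neq_ij yj); apply/setIidPl.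
have eAj : (y |: Ai) :&: Xj = [set y].
  rewrite setIUl (setI_other_block partP Pi Pj neq_ij sAi) setU0.
  by apply/setIidPl; rewrite sub1set.
have vy := nsc_singleton_weight_gt0 Pj yj.
have TA := nsc_total_weight_gt0 Pi xA xi; have SAi := sum_u_gt0 xAi.
rewrite (p_eq Pi xA) // (p_eq Pj (setU11 y Ai)) // eAi eAj big_set1.
by field; rewrite !gt_eqF.
Qed.

Lemma nsc_sim_degenerate_block (Xi Xj : {set X}) x y :
  Xi \in P -> Xj \in P -> Xi != Xj -> x \in Xi -> y \in Xj ->
  sim_p p x y -> degenerate_block u v Xi.
Proof.
move=> Pi Pj neq_ij xi yj sim_xy; exists x => // Ai sAi xAi.
have := sim_xy (y |: Ai) (setU1r y xAi) (setU11 y Ai).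
rewrite [[set x; y]]setUC !(nsc_ratio_setU1_other_block Pi Pj neq_ij) ?set11 ?sub1set //.
rewrite big_set1 => eq_ratio.
have vAi : 0 < v Ai by rewrite -(setIidPl sAi); apply: nsc_block_weight_gt0 Pi xAi xi.
have vx := nsc_singleton_weight_gt0 Pi xi; have vy := nsc_singleton_weight_gt0 Pj yj.
have SAi := sum_u_gt0 xAi; have ux := u_gt0 x.
apply: invr_inj; rewrite !invf_div.
transitivity (v Ai * u x / ((\sum_(b in Ai) u b) * v [set y]) * (v [set y] / u x)).
  by field; rewrite !gt_eqF.
by rewrite eq_ratio; field; rewrite !gt_eqF.
Qed.

Lemma nsc_nonsim_other_block (Xi Xj : {set X}) x y :
  nondegenerate_rep P u v ->
  Xi \in P -> Xj \in P -> Xi != Xj -> x \in Xi -> y \in Xj -> ~ sim_p p x y.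
Proof.
move=> nondeg Pi Pj neq_ij xi yj sim_xy; move/eqP: (neq_ij); apply.
apply: nondeg => //; first exact: nsc_sim_degenerate_block Pi Pj neq_ij xi yj sim_xy.
by apply: nsc_sim_degenerate_block Pj Pi _ yj xi (sim_p_sym sim_xy); rewrite eq_sym.
Qed.

Lemma nsc_le_setU1_other_block (Xi Xj A : {set X}) x y :
  Xi \in P -> Xj \in P -> Xi != Xj -> x \in Xi -> y \in Xj -> x \in A ->
  (p x (y |: A) <= p x A) = (v (A :&: Xj) <= v ((y |: A) :&: Xj)).
Proof.
move=> Pi Pj neq_ij xi yj xA; have xyA := setU1r y xA.
have split_total (B : {set X}) : \sum_(Xk in P) v (B :&: Xk)
    = v (B :&: Xj) + \sum_(Xk in P | Xk != Xj) v (B :&: Xk).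
  by rewrite (bigD1 Xj).
have same_others : \sum_(Xk in P | Xk != Xj) v ((y |: A) :&: Xk)
    = \sum_(Xk in P | Xk != Xj) v (A :&: Xk).
  by apply: eq_bigr => Xk /andP[Pk neq_kj]; rewrite (setU1I_other_block partP A Pk Pj).
have TA := nsc_total_weight_gt0 Pi xA xi; have TyA := nsc_total_weight_gt0 Pi xyA xi.
have vAi := nsc_block_weight_gt0 Pi xA xi.
have SAi : 0 < \sum_(b in A :&: Xi) u b by apply: (sum_u_gt0 (a := x)); rewrite inE xA.
rewrite (p_eq Pi xyA) // (p_eq Pi xA) // (setU1I_other_block partP A Pi Pj) //.
rewrite ler_pM2r ?divr_gt0 // ler_pM2l // lef_pV2 ?posrE //.
by rewrite !split_total same_others lerD2r.
Qed.

Lemma nsc_increasing_dissimilar_regularity :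
  (forall Xi A B : {set X}, Xi \in P -> B != set0 -> B \subset A -> A \subset Xi ->
     v B <= v A) ->
  dissimilar_regularity p.
Proof.
move=> v_mono A x y _ xA nsim_xy.
have Pi := pblock_setT_mem partP x; have xi := mem_pblock_setT partP x.
have Pj := pblock_setT_mem partP y; have yj := mem_pblock_setT partP y.
have [eq_ij|neq_ij] := eqVneq (pblock P x) (pblock P y).
  by case: nsim_xy; apply: nsc_sim_same_block Pi xi _; rewrite eq_ij.
rewrite (nsc_le_setU1_other_block Pi Pj neq_ij xi yj xA).
have [->|AXj_neq0] := eqVneq (A :&: pblock P y) set0; first by rewrite v_set0 vI_ge0.
by apply: (v_mono (pblock P y)) => //; [apply/setSI/subsetUr | apply: subsetIr].
Qed.

Lemma nsc_dissimilar_regularity_le_setU1 (Xi Xj B : {set X}) x y :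
  nondegenerate_rep P u v -> dissimilar_regularity p ->
  Xi \in P -> Xj \in P -> Xi != Xj -> x \in Xi -> B \subset Xj -> y \in Xj ->
  v B <= v (y |: B).
Proof.
move=> nondeg dr Pi Pj neq_ij xi sBj yj; have xB := setU11 x B.
have xB_neq0 : x |: B != set0 by apply/set0Pn; exists x.
have := dr _ x y xB_neq0 xB (nsc_nonsim_other_block nondeg Pi Pj neq_ij xi yj).
have eB : (x |: B) :&: Xj = B.
  rewrite setIUl (setI_other_block partP Pi Pj neq_ij (_ : [set x] \subset Xi)).
    by rewrite set0U; apply/setIidPl.
  by rewrite sub1set.
rewrite (nsc_le_setU1_other_block Pi Pj neq_ij xi yj xB) eB setIUl eB.
by rewrite (setIidPl _) ?sub1set.
Qed.

Lemma nsc_rep_single_block :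
  (#|P| <= 1)%N -> NSC_rep p P u (fun S => (S != set0)%:R).
Proof.
move=> /card_le1_eqP single; split; [exact: partP | exact: u_gt0 | | by rewrite eqxx |].
  by move=> * /=; apply: ler0n.
move=> A a Xi Pi aA ai; rewrite (p_eq Pi aA ai).
have -> : P = [set Xi].
  by apply/setP => Xk; rewrite inE; apply/idP/eqP => [Pk | ->] //; apply: single.
have AXi_neq0 : A :&: Xi != set0 by apply/set0Pn; exists a; rewrite inE aA ai.
have vAi := nsc_block_weight_gt0 Pi aA ai.
rewrite !big_set1 /= AXi_neq0 !divff ?gt_eqF //.
Qed.

End NSCRepresentation.

Theorem proposition8 (R : realType) (X : finType) (p : X -> {set X} -> R) :
  positive_scf p -> nondegenerate_NSC p ->
  (dissimilar_regularity p <-> increasing_NSC p).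
Proof.
move=> p_pos [P [u [v [rep nondeg]]]].
split=> [dr | [P' [u' [v' [rep' v'_mono]]]]]; last first.
  exact: nsc_increasing_dissimilar_regularity rep' v'_mono.
have partP : partition P [set: X] by case: rep.
have [single | many] := leqP #|P| 1.
  exists P, u, (fun S => (S != set0)%:R); split.
    exact: nsc_rep_single_block p_pos rep single.
  by move=> Xi A B _ B_neq0 sBA _ /=; rewrite B_neq0 (subset_neq0 sBA B_neq0).
exists P, u, v; split=> // Xj A B Pj _ sBA sAj.
have [Xi Pi neq_ij] := exists_other_mem Xj many.
have [x xi] : exists x, x \in Xi.
  by apply/set0Pn; apply: contraTneq Pi => ->; case/and3P: partP.
apply: (le_setU1_homo_subset _ sBA sAj) => B' y sB'j yj.
exact: nsc_dissimilar_regularity_le_setU1 nondeg dr Pi Pj neq_ij xi sB'j yj.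
Qed.
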